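(* Consider the CETC closed loop (continuous-time event-triggering rule with parameters $\theta,\eta,\theta_m,\kappa_0,\kappa_1,\kappa_2>0$ and $m^0<0$), and let $F=\sup_k t_k$. Then the dynamic variable satisfies $m(t)<0$ for all $t\in[0,F)$.
   Context: Standing setting. Fix $\ell>0$, $\lambda_1,\lambda_2>0$, $c_1,c_2\in C^0([0,\ell];\mathbb R)$ and constants $q\ne0$, $\rho\ne0$ with $|\rho q|\le \tfrac12$. For $f_1,\dots,f_n\in L^2(0,\ell)$ write $\|(f_1,\dots,f_n)^T\|=(\sum_i\|f_i\|^2_{L^2(0,\ell)})^{1/2}$. Let $\mathcal T=\{(x,\xi):0\le\xi\le x\le\ell\}$. Plant: $\partial_t u=-\lambda_1\partial_x u+c_1(x)v$, $\partial_t v=\lambda_2\partial_x v+c_2(x)u$, $u(0,t)=qv(0,t)$, $v(\ell,t)=\rho u(\ell,t)+\mathcal U(t)$, where $\mathcal U$ is the applied boundary input; measured output $v(0,t)$. Kernels (each system below has a unique continuous solution on $\mathcal T$): (P) $\lambda_1(\partial_x+\partial_\xi)P^{\alpha\alpha}=c_1(x)P^{\beta\alpha}$, $\lambda_1\partial_xP^{\alpha\beta}-\lambda_2\partial_\xi P^{\alpha\beta}=c_1(x)P^{\beta\beta}$, $\lambda_2\partial_xP^{\beta\alpha}-\lambda_1\partial_\xi P^{\beta\alpha}=-c_2(x)P^{\alpha\alpha}$, $\lambda_2(\partial_x+\partial_\xi)P^{\beta\beta}=-c_2(x)P^{\alpha\beta}$, with $P^{\alpha\alpha}(\ell,\xi)=\rho^{-1}P^{\beta\alpha}(\ell,\xi)$,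 $P^{\alpha\beta}(x,x)=-\frac{c_1(x)}{\lambda_1+\lambda_2}$, $P^{\beta\beta}(\ell,\xi)=\rho P^{\alpha\beta}(\ell,\xi)$, $P^{\beta\alpha}(x,x)=\frac{c_2(x)}{\lambda_1+\lambda_2}$. (R) $\lambda_1(\partial_x+\partial_\xi)R^{uu}=-c_2(\xi)R^{uv}$, $\lambda_1\partial_xR^{uv}-\lambda_2\partial_\xi R^{uv}=-c_1(\xi)R^{uu}$, $\lambda_2\partial_xR^{vu}-\lambda_1\partial_\xi R^{vu}=c_2(\xi)R^{vv}$, $\lambda_2(\partial_x+\partial_\xi)R^{vv}=c_1(\xi)R^{vu}$, with $R^{uu}(\ell,\xi)=\rho^{-1}R^{vu}(\ell,\xi)$, $R^{uv}(x,x)=-\frac{c_1(x)}{\lambda_1+\lambda_2}$, $R^{vv}(\ell,\xi)=\rho R^{uv}(\ell,\xi)$, $R^{vu}(x,x)=\frac{c_2(x)}{\lambda_1+\lambda_2}$. (K) $\lambda_1(\partial_x+\partial_\xi)K^{uu}=-c_2(\xi)K^{uv}$, $\lambda_1\partial_xK^{uv}-\lambda_2\partial_\xi K^{uv}=-c_1(\xi)K^{uu}$, $\lambda_2\partial_xK^{vu}-\lambda_1\partial_\xi K^{vu}=c_2(\xi)K^{vv}$, $\lambda_2(\partial_x+\partial_\xi)K^{vv}=c_1(\xi)K^{vu}$, with $K^{uu}(x,0)=\frac{\lambda_2}{q\lambda_1}K^{uv}(x,0)$, $K^{uv}(x,x)=\frac{c_1(x)}{\lambda_1+\lambda_2}$,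 $K^{vv}(x,0)=\frac{q\lambda_1}{\lambda_2}K^{vu}(x,0)$, $K^{vu}(x,x)=-\frac{c_2(x)}{\lambda_1+\lambda_2}$. Observer: with gains $p_1(x)=-\lambda_2P^{\alpha\beta}(x,0)$, $p_2(x)=-\lambda_2P^{\beta\beta}(x,0)$ and $\tilde v(0,t)=v(0,t)-\hat v(0,t)$: $\partial_t\hat u=-\lambda_1\partial_x\hat u+c_1(x)\hat v+p_1(x)\tilde v(0,t)$, $\partial_t\hat v=\lambda_2\partial_x\hat v+c_2(x)\hat u+p_2(x)\tilde v(0,t)$, $\hat u(0,t)=qv(0,t)$, $\hat v(\ell,t)=\rho\hat u(\ell,t)+\mathcal U(t)$. Transformed variables: $\tilde u=u-\hat u$, $\tilde v=v-\hat v$; $\tilde\beta(x,t)=\tilde v+\int_0^xR^{vu}(x,\xi)\tilde u(\xi,t)d\xi+\int_0^xR^{vv}(x,\xi)\tilde v(\xi,t)d\xi$ (so $\tilde\beta(0,t)=\tilde v(0,t)$); $\hat\alpha(x,t)=\hat u-\int_0^xK^{uu}(x,\xi)\hat u(\xi,t)d\xi-\int_0^xK^{uv}(x,\xi)\hat v(\xi,t)d\xi$, $\hat\beta(x,t)=\hat v-\int_0^xK^{vu}(x,\xi)\hat u(\xi,t)d\xi-\int_0^xK^{vv}(x,\xi)\hat v(\xi,t)d\xi$. Nominal feedback: $U(t)=\int_0^\ell N^u(\xi)\hat u(\xi,t)d\xi+\int_0^\ell N^v(\xi)\hat v(\xi,t)d\xi$ with $N^u(\xi)=K^{vu}(\ell,\xi)-\rho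 K^{uu}(\ell,\xi)$, $N^v(\xi)=K^{vv}(\ell,\xi)-\rho K^{uv}(\ell,\xi)$. Sampled-data input: given event times $0=t_0<t_1<\cdots$, the applied input is $\mathcal U(t)=U(t_k)$ for $t\in[t_k,t_{k+1})$ in both plant and observer; the input holding error is $d(t)=U(t_k)-U(t)$ for $t\in[t_k,t_{k+1})$. Dynamic variable: given $\eta,\theta_m,\kappa_0,\kappa_1,\kappa_2>0$ and $m^0<0$, $m$ is the continuous function with $m(0)=m^0$ that on each $(t_k,t_{k+1})$ solves $\dot m=-\eta m+\theta_m d^2-\kappa_0\|(\hat\alpha(\cdot,t),\hat\beta(\cdot,t))^T\|^2-\kappa_1\hat\alpha^2(\ell,t)-\kappa_2\tilde\beta^2(0,t)$. CETC rule: for $\theta>0$ let $\Gamma^c(t)=\theta d^2(t)+m(t)$; the event times are $t_0=0$ and $t_{k+1}=\inf\{t>t_k:\Gamma^c(t)>0\}$. *)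

From HB Require Import structures.
From mathcomp Require Import all_boot all_order all_algebra.
From mathcomp Require Import all_classical all_reals all_analysis.
Set Implicit Arguments. Unset Strict Implicit. Unset Printing Implicit Defensive.
Import Order.TTheory GRing.Theory Num.Theory.
Import numFieldNormedType.Exports.
Local Open Scope classical_set_scope.
Local Open Scope ring_scope.

Section CETC.
Variable R : realType.

Definition Lint (f : R -> R) (a b : R) : R :=
  Rintegral (@lebesgue_measure R) `[a, b] f.

Definition L2sq (ell : R) (f : R -> R) : R := Lint (fun x => f x ^+ 2) 0 ell.

(* Space-time fields are written f x t. *)

Definition tbeta (Rvu Rvv : R -> R -> R) (u v uh vh : R -> R -> R) (x t : R) : R :=
  (v x t - vh x t)
  + Lint (fun xi => Rvu x xi * (u xi t - uh xi t)) 0 x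
  + Lint (fun xi => Rvv x xi * (v xi t - vh xi t)) 0 x.

Definition halpha (Kuu Kuv : R -> R -> R) (uh vh : R -> R -> R) (x t : R) : R :=
  uh x t - Lint (fun xi => Kuu x xi * uh xi t) 0 x
         - Lint (fun xi => Kuv x xi * vh xi t) 0 x.

Definition hbeta (Kvu Kvv : R -> R -> R) (uh vh : R -> R -> R) (x t : R) : R :=
  vh x t - Lint (fun xi => Kvu x xi * uh xi t) 0 x
         - Lint (fun xi => Kvv x xi * vh xi t) 0 x.

Definition hnorm2 (ell : R) (Kuu Kuv Kvu Kvv : R -> R -> R) (uh vh : R -> R -> R) (t : R) : R :=
  L2sq ell (fun x => halpha Kuu Kuv uh vh x t) + L2sq ell (fun x => hbeta Kvu Kvv uh vh x t).

Definition Ufb (ell rho : R) (Kuu Kuv Kvu Kvv : R -> R -> R) (uh vh : R -> R -> R) (t : R) : R :=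
  Lint (fun xi => (Kvu ell xi - rho * Kuu ell xi) * uh xi t) 0 ell
  + Lint (fun xi => (Kvv ell xi - rho * Kuv ell xi) * vh xi t) 0 ell.

End CETC.

Set Warnings "-notation-overridden,-ambiguous-paths,-notation-incompatible-prefix".
From HB Require Import structures.
From mathcomp Require Import all_boot all_order all_algebra.
From mathcomp Require Import all_classical all_reals all_analysis.
From mathcomp Require Import lra.
Import Order.TTheory GRing.Theory Num.Theory.
Import numFieldNormedType.Exports.
Local Open Scope classical_set_scope.
Local Open Scope ring_scope.

(* Between two events the triggering rule keeps [theta d^2 + m <= 0], so the
   holding-error term of the ODE for [m] is bounded by [-(thetam/theta) m] and
   [m' <= -(eta + thetam/theta) m].  By a Gronwall argument [m] cannot reach
   [0] on an inter-event interval; since [m] is continuous across events, an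
   induction on the events gives [m < 0] up to the supremum of the event times. *)

Lemma is_derive_expR_scale (R : realType) (c x : R) :
  is_derive x 1 (fun y => expR (c * y)) (c * expR (c * x)).
Proof.
have dcx : is_derive x 1 (fun y : R => c * y) c.
  have := @is_deriveZ R R R id c x 1 1 (is_derive_id _ _).
  by rewrite /GRing.scale /= mulr1.
have := is_derive1_comp (is_derive_expR (c * x)) dcx.
by rewrite mulrC.
Qed.

Lemma gronwall_lt0 (R : realType) (f df : R -> R) (c a b : R) :
  a < b -> f a < 0 -> f @ a^'+ --> f a ->
  (forall x, a < x <= b -> is_derive x 1 f (df x)) ->
  (forall x, a < x < b -> df x <= - c * f x) -> f b < 0.
Proof.
move=> ab fa0 f_right f_derive df_le.
pose g x := f x * expR (c * x).
pose dg x := (df x + c * f x) * expR (c * x).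
have g_derive x : a < x <= b -> is_derive x 1 g (dg x).
  move=> /f_derive fx.
  have := @is_deriveM R R f (fun y => expR (c * y)) x 1 _ _ fx (is_derive_expR_scale _ c x).
  by rewrite /GRing.scale /=; congr is_derive; rewrite /dg; lra.
have g_cont_at x : a < x <= b -> {for x, continuous g}.
  by move=> /g_derive[/derivable1_diffP/differentiable_continuous].
have g_cont : {within `[a, b], continuous g}.
  apply/continuous_within_itvP => //; split.
  - by move=> x; rewrite in_itv /= => /andP[ax xb]; apply: g_cont_at; rewrite ax ltW.
  - apply: cvgM => //; apply: cvg_at_right_filter.
    apply: continuous_comp; [exact: mulrl_continuous | exact: continuous_expR].
  - by apply: cvg_at_left_filter; apply: g_cont_at; rewrite ab lexx.
have [xi] : exists2 xi, xi \in `]a, b[ & g b - g a = dg xi * (b - a).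
  apply: MVT ab _ g_cont => x; rewrite in_itv /= => /andP[ax xb].
  by apply: g_derive; rewrite ax ltW.
rewrite in_itv /= => /andP[axi xib] g_incr.
have dg_le0 : dg xi <= 0.
  rewrite /dg pmulr_lle0 ?expR_gt0 //.
  have /df_le : a < xi < b by rewrite axi.
  lra.
have ga_lt0 : g a < 0 by rewrite /g pmulr_llt0 ?expR_gt0.
have : g b - g a <= 0 by rewrite g_incr mulr_le0_ge0 // subr_ge0 ltW.
have : g b < 0 -> f b < 0 by rewrite /g pmulr_llt0 ?expR_gt0.
lra.
Qed.

Lemma held_error_rate_le (R : realFieldType) (theta eta thetam M D P : R) :
  0 < theta -> 0 <= thetam -> theta * D + M <= 0 -> 0 <= P ->
  - eta * M + thetam * D - P <= - (eta + thetam / theta) * M.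
Proof.
move=> theta_gt0 thetam_ge0 trig_le0 P_ge0.
have -> : thetam * D = thetam / theta * (theta * D).
  by rewrite mulrA divfK ?gt_eqF.
have : 0 <= thetam / theta by rewrite divr_ge0 // ltW.
move: (thetam / theta) => r r_ge0.
have : r * (theta * D + M) <= 0 by rewrite mulr_ge0_le0.
lra.
Qed.

Lemma lt_ereal_inf_image_notin (R : realType) (A : set R) (x : R) :
  (x%:E < ereal_inf [set s%:E | s in A])%E -> ~ A x.
Proof.
by move=> + Ax; rewrite ltNge => /negP; apply; apply: ereal_inf_lbound; exists x.
Qed.

Lemma hnorm2_ge0 (R : realType) (ell : R) (Kuu Kuv Kvu Kvv : R -> R -> R)
    (uh vh : R -> R -> R) (t : R) :
  0 <= hnorm2 ell Kuu Kuv Kvu Kvv uh vh t.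
Proof. by apply: addr_ge0; apply: Rintegral_ge0 => x _; apply: sqr_ge0. Qed.

Section dynamic_variable_negative.
Variables (R : realType) (theta eta thetam : R).
Variables (t : nat -> \bar R) (U mk dissip : nat -> R -> R) (m : R -> R).
(* [U k] is the nominal feedback along the k-th continuation, so the holding
   error on [t_k, t_{k+1}) is [U k tk - U k s]. *)

Hypothesis theta_gt0 : 0 < theta.
Hypothesis thetam_ge0 : 0 <= thetam.
Hypothesis t0 : t 0%N = 0%:E.
Hypothesis t_pinfty : forall k, t k = +oo%E -> t k.+1 = +oo%E.
Hypothesis t_next : forall k (tk : R), t k = tk%:E ->
  (tk%:E < t k.+1)%E /\
  t k.+1 = ereal_inf [set s%:E | s in [set s : R | tk < s /\
                        0 < theta * (U k tk - U k s) ^+ 2 + mk k s]].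
Hypothesis mk_right : forall k (tk : R), t k = tk%:E -> mk k @ at_right tk --> mk k tk.
Hypothesis mk_derive : forall k (tk s : R), t k = tk%:E -> tk < s ->
  is_derive s 1 (mk k) (- eta * mk k s + thetam * (U k tk - U k s) ^+ 2 - dissip k s).
Hypothesis dissip_ge0 : forall k s, 0 <= dissip k s.
Hypothesis mk0_lt0 : mk 0%N 0 < 0.
Hypothesis mk_event : forall k (tk1 : R), t k.+1 = tk1%:E -> mk k.+1 tk1 = mk k tk1.
Hypothesis m_mk : forall k (tk s : R), t k = tk%:E -> tk <= s -> (s%:E < t k.+1)%E ->
  m s = mk k s.

Lemma event_time_cases k : t k = +oo%E \/ exists tk : R, t k = tk%:E.
Proof.
elim: k => [|k [/t_pinfty|[tk /t_next[]]]]; [by right; exists 0 | by left |].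
by case: (t k.+1) => [x _ _| |]; [right; exists x | left |].
Qed.

Lemma trigger_le0 k (tk s : R) : t k = tk%:E -> tk < s -> (s%:E < t k.+1)%E ->
  theta * (U k tk - U k s) ^+ 2 + mk k s <= 0.
Proof.
move=> /t_next[_ ->] tks /lt_ereal_inf_image_notin s_notin.
by rewrite leNgt; apply/negP => trig_gt0; apply: s_notin.
Qed.

Lemma mk_lt0_between k (tk s : R) : t k = tk%:E -> mk k tk < 0 ->
  tk < s -> (s%:E <= t k.+1)%E -> mk k s < 0.
Proof.
move=> tkE mk_lt0 tks s_le.
apply: (gronwall_lt0 _ _ _ (eta + thetam / theta) _ _ tks mk_lt0 (mk_right _ _ tkE)).
  by move=> x /andP[tkx _]; apply: (mk_derive _ _ _ tkE tkx).
move=> x /andP[tkx xs]; apply: held_error_rate_le => //.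
by apply: (trigger_le0 _ _ _ tkE tkx); apply: lt_le_trans s_le; rewrite lte_fin.
Qed.

Lemma mk_lt0_at_event k (tk : R) : t k = tk%:E -> mk k tk < 0.
Proof.
elim: k tk => [|k IH] tk; first by rewrite t0 => -[<-].
move=> tkE; rewrite (mk_event _ _ tkE).
have [/t_pinfty|[tk' tk'E]] := event_time_cases k; first by rewrite tkE.
have [+ _] := t_next _ _ tk'E; rewrite tkE lte_fin => tk'tk.
by apply: (mk_lt0_between _ _ _ tk'E (IH _ tk'E) tk'tk); rewrite tkE.
Qed.

Lemma m_lt0_before_sup s : 0 <= s -> (s%:E < ereal_sup (range t))%E -> m s < 0.
Proof.
move=> s_ge0 /ereal_sup_gt[_ [n _ <-]].
elim: n => [|n IH s_lt]; first by rewrite t0 lte_fin ltNge s_ge0.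
have [/IH//|tn_le] := ltP s%:E (t n).
have [tnE|[tn tnE]] := event_time_cases n; first by move: tn_le; rewrite tnE leNgt ltey.
move: tn_le; rewrite tnE lee_fin => tn_s.
rewrite (m_mk _ _ _ tnE tn_s s_lt).
have [<-|tn_neq] := eqVneq tn s; first exact: mk_lt0_at_event _ _ tnE.
apply: (mk_lt0_between _ _ _ tnE (mk_lt0_at_event _ _ tnE) _ (ltW s_lt)).
by rewrite lt_neqAle tn_neq.
Qed.

End dynamic_variable_negative.

Theorem lemma2 (R : realType)
  (ell lam1 lam2 : R) (c1 c2 : R -> R) (q rho : R)
  (Kuu Kuv Kvu Kvv Rvu Rvv : R -> R -> R)
  (theta eta thetam kap0 kap1 kap2 m0 : R)
  (u v uh vh : nat -> R -> R -> R)
  (t : nat -> \bar R) (mk : nat -> R -> R) (m : R -> R) :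
  0 < ell -> 0 < lam1 -> 0 < lam2 ->
  {within `[0, ell], continuous c1} -> {within `[0, ell], continuous c2} ->
  q != 0 -> rho != 0 -> `|rho * q| <= 2^-1 ->
  0 < theta -> 0 < eta -> 0 < thetam -> 0 < kap0 -> 0 < kap1 -> 0 < kap2 -> m0 < 0 ->
  (* event times: t_0 = 0, increasing, and the CETC rule, where on [t_k, oo) the
     closed loop with the input held at U(t_k) is the k-th continuation
     (u k, v k, uh k, vh k, mk k) *)
  t 0%N = 0%:E ->
  (forall k, t k = +oo%E -> t k.+1 = +oo%E) ->
  (forall k (tk : R), t k = tk%:E ->
     (tk%:E < t k.+1)%E /\
     t k.+1 = ereal_inf [set s%:E | s in [set s : R | tk < s /\
        0 < theta * (Ufb ell rho Kuu Kuv Kvu Kvv (uh k) (vh k) tk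
                     - Ufb ell rho Kuu Kuv Kvu Kvv (uh k) (vh k) s) ^+ 2 + mk k s]]) ->
  (* dynamic variable along the k-th continuation *)
  (forall k (tk : R), t k = tk%:E ->
     (mk k @ at_right tk --> mk k tk) /\
     (forall s, tk < s ->
        is_derive s 1 (mk k)
          (- eta * mk k s
           + thetam * (Ufb ell rho Kuu Kuv Kvu Kvv (uh k) (vh k) tk
                       - Ufb ell rho Kuu Kuv Kvu Kvv (uh k) (vh k) s) ^+ 2
           - kap0 * hnorm2 ell Kuu Kuv Kvu Kvv (uh k) (vh k) s
           - kap1 * (halpha Kuu Kuv (uh k) (vh k) ell s) ^+ 2
           - kap2 * (tbeta Rvu Rvv (u k) (v k) (uh k) (vh k) 0 s) ^+ 2))) ->
  (* m(0) = m^0, continuity of m at event times, m = mk k on [t_k, t_{k+1}) *)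
  mk 0%N 0 = m0 ->
  (forall k (tk1 : R), t k.+1 = tk1%:E -> mk k.+1 tk1 = mk k tk1) ->
  (forall k (tk s : R), t k = tk%:E -> tk <= s -> (s%:E < t k.+1)%E -> m s = mk k s) ->
  forall s : R, 0 <= s -> (s%:E < ereal_sup (range t))%E -> m s < 0.
Proof.
move=> _ _ _ _ _ _ _ _ theta_gt0 _ thetam_gt0 kap0_gt0 kap1_gt0 kap2_gt0 m0_lt0
  t0 t_pinfty t_next mk_dyn mk0 mk_event m_mk.
pose dissip k s := kap0 * hnorm2 ell Kuu Kuv Kvu Kvv (uh k) (vh k) s
  + kap1 * halpha Kuu Kuv (uh k) (vh k) ell s ^+ 2
  + kap2 * tbeta Rvu Rvv (u k) (v k) (uh k) (vh k) 0 s ^+ 2.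
have dissip_ge0 k s : 0 <= dissip k s.
  by rewrite !addr_ge0 //; apply: mulr_ge0; rewrite ?sqr_ge0 ?hnorm2_ge0 ?ltW.
apply: (m_lt0_before_sup _ _ eta _ _ _ _ dissip _ theta_gt0 (ltW thetam_gt0)
          t0 t_pinfty t_next _ _ dissip_ge0 _ mk_event m_mk).
- by move=> k tk /mk_dyn[].
- move=> k tk s /mk_dyn[_ /(_ s)] mk_derive /mk_derive.
  by rewrite /dissip !opprD !addrA.
- by rewrite mk0.
Qed.
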